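(* Let $H_0,H_1$ be complex Hilbert spaces, $G$ a densely defined closed operator from $H_0$ into $H_1$ and $D$ a densely defined closed operator from $H_1$ into $H_0$ with $-G^*\subset D$. Let $a\in\mathcal L(H_1)$ and $m\in\mathcal L(H_0)$ be coercive and let $u_0\in\mathrm{BD}(G)$. Then there exists a unique $u\in\mathrm{dom}(DaG)$ such that $mu-DaGu=0$ and $u-u_0\in\mathrm{dom}(\mathring G)$.
   Context: $\mathring G=-D^*$, $\mathring D=-G^*$. Domains carry graph inner products, e.g. $(u,v)_{\mathrm{dom}(G)}=(u,v)_{H_0}+(Gu,Gv)_{H_1}$. $\mathrm{BD}(G)$ is the orthogonal complement of $\mathrm{dom}(\mathring G)$ in $\mathrm{dom}(G)$. $\mathrm{dom}(DaG)=\{u\in\mathrm{dom}(G):aGu\in\mathrm{dom}(D)\}$. A bounded operator $M$ is coercive if $\mathrm{Re}(Mx,x)\ge\mu\|x\|^2$ for some $\mu>0$ and all $x$. *)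

From HB Require Import structures.
From mathcomp Require Import all_boot all_order all_algebra.
From mathcomp Require Import reals complex.
Set Implicit Arguments. Unset Strict Implicit. Unset Printing Implicit Defensive.
Import Order.TTheory GRing.Theory Num.Theory.
Local Open Scope ring_scope.

Definition is_inner_product (R : realType) (V : lmodType R[i])
    (ip : V -> V -> R[i]) : Prop :=
  [/\ (forall (c : R[i]) (x y z : V), ip (c *: x + y) z = c * ip x z + ip y z),
      (forall x y : V, ip y x = (ip x y)^*),
      (forall x : V, 0 <= ip x x) &
      (forall x : V, ip x x = 0 -> x = 0)].

Definition ipnorm (R : realType) (V : lmodType R[i]) (ip : V -> V -> R[i])
    (x : V) : R[i] := sqrtC (ip x x).

Definition ip_cvg (R : realType) (V : lmodType R[i]) (ip : V -> V -> R[i])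
    (u : nat -> V) (l : V) : Prop :=
  forall eps : R[i], 0 < eps -> exists N : nat, forall n : nat, (N <= n)%N ->
    ipnorm ip (u n - l) < eps.

Definition ip_cauchy (R : realType) (V : lmodType R[i]) (ip : V -> V -> R[i])
    (u : nat -> V) : Prop :=
  forall eps : R[i], 0 < eps -> exists N : nat, forall m n : nat,
    (N <= m)%N -> (N <= n)%N -> ipnorm ip (u m - u n) < eps.

Record hilbert (R : realType) := Hilbert {
  hcarrier :> lmodType R[i];
  hinner : hcarrier -> hcarrier -> R[i];
  hinner_ax : is_inner_product hinner;
  hcomplete : forall u : nat -> hcarrier, ip_cauchy hinner u ->
                exists l, ip_cvg hinner u l
}.
Arguments hinner {R} h _ _.

Notation "'<<' x , y '>_' H" := (hinner H x y) (at level 0, format "'<<' x ,  y '>_' H").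
Notation "'||' x '||_' H" := (ipnorm (hinner H) x) (at level 0, format "'||' x '||_' H").

(* A (possibly unbounded) operator T from H0 to H1 is a pair (dom, T) with
   dom a linear subspace of H0 and T : H0 -> H1 linear on dom (values of T
   outside dom are irrelevant). *)
Definition is_operator (R : realType) (H0 H1 : hilbert R)
    (dom : H0 -> Prop) (T : H0 -> H1) : Prop :=
  [/\ dom 0,
      (forall (c : R[i]) (x y : H0), dom x -> dom y -> dom (c *: x + y)) &
      (forall (c : R[i]) (x y : H0), dom x -> dom y ->
         T (c *: x + y) = c *: T x + T y)].

Definition densely_defined (R : realType) (H0 : hilbert R)
    (dom : H0 -> Prop) : Prop :=
  forall (x : H0) (eps : R[i]), 0 < eps -> exists y : H0, dom y /\ ||x - y||_H0 < eps.

Definition closed_operator (R : realType) (H0 H1 : hilbert R)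
    (dom : H0 -> Prop) (T : H0 -> H1) : Prop :=
  forall (u : nat -> H0) (x : H0) (y : H1),
    (forall n, dom (u n)) -> ip_cvg (hinner H0) u x ->
    ip_cvg (hinner H1) (fun n => T (u n)) y ->
    dom x /\ T x = y.

Definition densely_defined_closed (R : realType) (H0 H1 : hilbert R)
    (dom : H0 -> Prop) (T : H0 -> H1) : Prop :=
  [/\ is_operator dom T, densely_defined dom & closed_operator dom T].

(* Adjoint T^* : H1 -> H0 of (dom, T) : H0 -> H1, described by its graph:
   y \in dom(T^* ) with T^* y = z  iff  <T x, y> = <x, z> for all x in dom. *)
Definition adjoint_graph (R : realType) (H0 H1 : hilbert R)
    (dom : H0 -> Prop) (T : H0 -> H1) (y : H1) (z : H0) : Prop :=
  forall x : H0, dom x -> << T x, y >_H1 = << x, z >_H0.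

Definition adjoint_dom (R : realType) (H0 H1 : hilbert R)
    (dom : H0 -> Prop) (T : H0 -> H1) (y : H1) : Prop :=
  exists z : H0, adjoint_graph dom T y z.

(* operator inclusion  -T^* \subset S  (S : H1 -> H0 with domain domS) *)
Definition neg_adjoint_sub (R : realType) (H0 H1 : hilbert R)
    (domT : H0 -> Prop) (T : H0 -> H1) (domS : H1 -> Prop) (S : H1 -> H0) : Prop :=
  forall (y : H1) (z : H0), adjoint_graph domT T y z -> domS y /\ S y = - z.

(* dom(\mathring G) where \mathring G = - D^*  *)
Definition dom_Gring (R : realType) (H0 H1 : hilbert R)
    (domD : H1 -> Prop) (D : H1 -> H0) : H0 -> Prop :=
  adjoint_dom domD D.

(* BD(G): orthogonal complement of dom(\mathring G) in dom(G), w.r.t. the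
   graph inner product (u,v)_{dom G} = (u,v)_{H0} + (Gu,Gv)_{H1}. *)
Definition BD (R : realType) (H0 H1 : hilbert R)
    (domG : H0 -> Prop) (G : H0 -> H1) (domD : H1 -> Prop) (D : H1 -> H0)
    (u : H0) : Prop :=
  domG u /\ forall v : H0, dom_Gring domD D v ->
    << u, v >_H0 + << G u, G v >_H1 = 0.

Definition dom_DaG (R : realType) (H0 H1 : hilbert R)
    (domG : H0 -> Prop) (G : H0 -> H1) (domD : H1 -> Prop) (a : H1 -> H1)
    (u : H0) : Prop :=
  domG u /\ domD (a (G u)).

Definition bounded_linear (R : realType) (H : hilbert R) (M : H -> H) : Prop :=
  (forall (c : R[i]) (x y : H), M (c *: x + y) = c *: M x + M y) /\
  exists C : R[i], 0 <= C /\ forall x : H, ||M x||_H <= C * ||x||_H.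

Definition coercive (R : realType) (H : hilbert R) (M : H -> H) : Prop :=
  bounded_linear M /\
  exists mu : R[i], 0 < mu /\ forall x : H, mu * ||x||_H ^+ 2 <= 'Re << M x, x >_H.

(* Existence is a Lax-Milgram problem on the graph of the operator
   G° := -D^*, which is a closed subspace of H0 x H1.  The block operator
   diag(m, a) is bounded and coercive there, so there is (w, G° w) in that
   graph with diag(m, a)(u0 + w, G u0 + G° w) orthogonal to it.  Since
   -G^* is contained in D and G is closed, G° is a restriction of G; putting
   u := u0 + w, the orthogonality says <a G u, r> = <s, m u> for every
   (s, r) in the graph of D^*, i.e. (a G u, m u) lies in the graph of D^**,
   which is D because D is closed.  For uniqueness, the difference v of two
   solutions satisfies <m v, v> = -<a G v, G v> by the definition of
   adjoint, and coercivity of m and a forces v = 0.  Lax-Milgram and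
   the inclusion of T^** in a closed T both follow from the projection theorem. *)

From mathcomp Require Import all_boot all_order all_algebra.
From mathcomp Require Import boolp classical_sets reals complex.
From mathcomp Require Import ring lra.
Import Order.TTheory GRing.Theory Num.Theory.
Local Open Scope ring_scope.

Set Implicit Arguments.
Unset Strict Implicit.
Unset Printing Implicit Defensive.

Local Notation Re := complex.Re.
Local Notation Im := complex.Im.

Section ComplexParts.
Variable R : realType.
Implicit Types (z w : R[i]) (t : R).

Lemma ReD z w : Re (z + w) = Re z + Re w. Proof. by case: z; case: w. Qed.
Lemma ReN z : Re (- z) = - Re z. Proof. by case: z. Qed.
Lemma ReJ z : Re z^* = Re z. Proof. by case: z. Qed.
Lemma ReM_real t z : Re (t%:C%C * z) = t * Re z.
Proof. by case: z => a b /=; rewrite mul0r subr0. Qed.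
Lemma conj_realC t : (t%:C%C : R[i])^* = t%:C%C.
Proof. exact: conjc_real. Qed.

Lemma ReJiM z : Re ('i%C^* * z) = Im z.
Proof. by case: z => a b; simpc. Qed.

Lemma complex_eq0 z : Re z = 0 -> Im z = 0 -> z = 0.
Proof. by case: z => a b /= -> ->. Qed.

Lemma ge0_realE z : 0 <= z -> z = (Re z)%:C%C /\ 0 <= Re z.
Proof. by case: z => a b; rewrite lecE /= => /andP[/eqP -> a0]. Qed.

Lemma gt0_realE z : 0 < z -> z = (Re z)%:C%C /\ 0 < Re z.
Proof. by case: z => a b; rewrite ltcE /= => /andP[/eqP -> a0]. Qed.

End ComplexParts.

Lemma quadratic_ge0_eq0 (R : realFieldType) (N r : R) :
  0 <= N -> (forall t, 0 <= t ^+ 2 * N - 2 * t * r) -> r = 0.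
Proof.
move=> N0 quad; have N1 : N + 1 != 0 by rewrite gt_eqF //; lra.
have := quad (r / (N + 1)); set t := r / (N + 1) => quad_t.
have tE : t * (N + 1) = r by rewrite /t divfK.
have t0 : t = 0 by nra.
by rewrite -tE t0 mul0r.
Qed.

Lemma invSn_lt (R : realType) (e : R) : 0 < e ->
  exists N, forall n, (N <= n)%N -> n.+1%:R^-1 < e.
Proof.
move=> e0; exists (Num.bound e^-1) => n Nn.
rewrite -[e]invrK ltf_pV2 ?posrE ?invr_gt0 ?ltr0Sn //.
apply: lt_le_trans (archi_boundP (ltW _)) _; first by rewrite invr_gt0.
by rewrite ler_nat; apply: leqW.
Qed.

Definition sqnorm (R : realType) (V : lmodType R[i]) (ip : V -> V -> R[i]) (x : V) : R :=
  Re (ip x x).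

Definition sq_cvg (R : realType) (V : lmodType R[i]) (ip : V -> V -> R[i])
    (u : nat -> V) (l : V) : Prop :=
  forall e : R, 0 < e -> exists N, forall n, (N <= n)%N -> sqnorm ip (u n - l) < e.

Definition sq_cauchy (R : realType) (V : lmodType R[i]) (ip : V -> V -> R[i])
    (u : nat -> V) : Prop :=
  forall e : R, 0 < e -> exists N, forall m n, (N <= m)%N -> (N <= n)%N ->
    sqnorm ip (u m - u n) < e.

Section SquaredNorm.
Variables (R : realType) (V : lmodType R[i]) (ip : V -> V -> R[i]).
Hypothesis ip_ge0 : forall x, 0 <= ip x x.

Lemma ip_sqnorm x : ip x x = (sqnorm ip x)%:C%C.
Proof. exact: (ge0_realE (ip_ge0 x)).1. Qed.

Lemma sqnorm_ge0 x : 0 <= sqnorm ip x.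
Proof. exact: (ge0_realE (ip_ge0 x)).2. Qed.

Lemma ipnormE x : ipnorm ip x = (Num.sqrt (sqnorm ip x))%:C%C.
Proof.
rewrite /ipnorm ip_sqnorm -{1}(sqr_sqrtr (sqnorm_ge0 x)) rmorphXn sqrCK //.
by rewrite lecR sqrtr_ge0.
Qed.

Lemma ipnorm_ltE x (r : R) : 0 < r -> (ipnorm ip x < r%:C%C) = (sqnorm ip x < r ^+ 2).
Proof.
move=> r0.
by rewrite ipnormE ltcR -[in RHS]ltr_sqrt ?exprn_gt0 // sqrtr_sqr gtr0_norm.
Qed.

Lemma ip_cvgE u l : ip_cvg ip u l <-> sq_cvg ip u l.
Proof.
split=> [cvg_u e e0 | cvg_u eps /gt0_realE [-> eps0]].
  have /cvg_u [N uN] : 0 < (Num.sqrt e)%:C%C by rewrite ltcR sqrtr_gt0.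
  by exists N => n Nn; rewrite -(sqr_sqrtr (ltW e0)) -ipnorm_ltE ?sqrtr_gt0 ?uN.
have [N uN] := cvg_u _ (exprn_gt0 2 eps0).
by exists N => n Nn; rewrite ipnorm_ltE ?uN.
Qed.

Lemma ip_cauchyE u : ip_cauchy ip u <-> sq_cauchy ip u.
Proof.
split=> [cauchy_u e e0 | cauchy_u eps /gt0_realE [-> eps0]].
  have /cauchy_u [N uN] : 0 < (Num.sqrt e)%:C%C by rewrite ltcR sqrtr_gt0.
  by exists N => m n Nm Nn; rewrite -(sqr_sqrtr (ltW e0)) -ipnorm_ltE ?sqrtr_gt0 ?uN.
have [N uN] := cauchy_u _ (exprn_gt0 2 eps0).
by exists N => m n Nm Nn; rewrite ipnorm_ltE ?uN.
Qed.

End SquaredNorm.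

Section InnerProduct.
Variables (R : realType) (H : hilbert R).
Implicit Types (x y z : H) (c : R[i]) (t : R).
Local Notation nsq := (sqnorm (hinner H)).

Lemma ipDZl c x y z : << c *: x + y, z >_H = c * << x, z >_H + << y, z >_H.
Proof. by case: (hinner_ax H). Qed.

Lemma ipC x y : << y, x >_H = (<< x, y >_H)^*.
Proof. by case: (hinner_ax H). Qed.

Lemma ip_ge0 x : 0 <= << x, x >_H.
Proof. by case: (hinner_ax H). Qed.

Lemma ip_eq0 x : << x, x >_H = 0 -> x = 0.
Proof. by case: (hinner_ax H) => _ _ _; apply. Qed.

Lemma ipDl x y z : << x + y, z >_H = << x, z >_H + << y, z >_H.
Proof. by have := ipDZl 1 x y z; rewrite scale1r mul1r. Qed.

Lemma ip0l z : << 0, z >_H = 0.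
Proof. by apply: (addrI << 0, z >_H); rewrite -ipDl !addr0. Qed.

Lemma ipZl c x z : << c *: x, z >_H = c * << x, z >_H.
Proof. by rewrite -[c *: x]addr0 ipDZl ip0l addr0. Qed.

Lemma ipNl x z : << - x, z >_H = - << x, z >_H.
Proof. by rewrite -scaleN1r ipZl mulN1r. Qed.

Lemma ipBl x y z : << x - y, z >_H = << x, z >_H - << y, z >_H.
Proof. by rewrite ipDl ipNl. Qed.

Lemma ipDr z x y : << z, x + y >_H = << z, x >_H + << z, y >_H.
Proof. by rewrite ipC ipDl rmorphD (ipC x z) (ipC y z). Qed.

Lemma ipZr z c x : << z, c *: x >_H = c^* * << z, x >_H.
Proof. by rewrite ipC ipZl rmorphM (ipC x z). Qed.

Lemma ipNr z x : << z, - x >_H = - << z, x >_H.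
Proof. by rewrite ipC ipNl rmorphN (ipC x z). Qed.

Lemma ipBr z x y : << z, x - y >_H = << z, x >_H - << z, y >_H.
Proof. by rewrite ipDr ipNr. Qed.

Lemma ip_orthC x y : << x, y >_H = 0 -> << y, x >_H = 0.
Proof. by move=> xy0; rewrite ipC xy0 rmorph0. Qed.

Lemma Re_ipC x y : Re << y, x >_H = Re << x, y >_H.
Proof. by rewrite ipC ReJ. Qed.

Lemma Re_ipZl t x y : Re << t%:C%C *: x, y >_H = t * Re << x, y >_H.
Proof. by rewrite ipZl ReM_real. Qed.

Lemma Re_ipZr t x y : Re << x, t%:C%C *: y >_H = t * Re << x, y >_H.
Proof. by rewrite ipZr conj_realC ReM_real. Qed.

Lemma sqnorm_eq0 x : nsq x = 0 -> x = 0.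
Proof. by move=> x0; apply: ip_eq0; rewrite (ip_sqnorm ip_ge0) x0. Qed.

Lemma sqnormN x : nsq (- x) = nsq x.
Proof. by rewrite /sqnorm ipNl ipNr opprK. Qed.

Lemma sqnormZ t x : nsq (t%:C%C *: x) = t ^+ 2 * nsq x.
Proof. by rewrite /sqnorm ipZl ipZr conj_realC mulrA -rmorphM ReM_real expr2. Qed.

Lemma sqnormD x y : nsq (x + y) = nsq x + nsq y + 2 * Re << x, y >_H.
Proof. rewrite /sqnorm ipDl !ipDr !ReD (Re_ipC y x); ring. Qed.

Lemma sqnormB x y : nsq (x - y) = nsq x + nsq y - 2 * Re << x, y >_H.
Proof. rewrite sqnormD sqnormN ipNr ReN; ring. Qed.

Lemma parallelogram x y : nsq (x + y) + nsq (x - y) = 2 * nsq x + 2 * nsq y.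
Proof. rewrite sqnormD sqnormB; ring. Qed.

Lemma Re_ip_le t x y : 2 * t * Re << x, y >_H <= t ^+ 2 * nsq x + nsq y.
Proof.
have := sqnorm_ge0 ip_ge0 (t%:C%C *: x - y).
rewrite sqnormB sqnormZ Re_ipZl; lra.
Qed.

Lemma sqnormD_le2 x y : nsq (x + y) <= 2 * nsq x + 2 * nsq y.
Proof. have := parallelogram x y; have := sqnorm_ge0 ip_ge0 (x - y); lra. Qed.

Lemma sqnormD_le t x y :
  0 < t -> t * nsq (x + y) <= t * (1 + t) * nsq x + (1 + t) * nsq y.
Proof.
move=> t0; have := Re_ip_le t x y; rewrite sqnormD.
have := sqnorm_ge0 ip_ge0 x; have := sqnorm_ge0 ip_ge0 y; nra.
Qed.

End InnerProduct.

Definition subspace (R : realType) (H : hilbert R) (S : H -> Prop) : Prop :=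
  S 0 /\ forall c x y, S x -> S y -> S (c *: x + y).

Definition closed_set (R : realType) (H : hilbert R) (S : H -> Prop) : Prop :=
  forall u l, (forall n, S (u n)) -> sq_cvg (hinner H) u l -> S l.

Definition orth (R : realType) (H : hilbert R) (A : H -> Prop) (x : H) : Prop :=
  forall a, A a -> << x, a >_H = 0.

Section Topology.
Variables (R : realType) (H : hilbert R).
Implicit Types (x y q : H) (u v : nat -> H) (A : H -> Prop).
Local Notation nsq := (sqnorm (hinner H)).
Local Notation cvg := (sq_cvg (hinner H)).
Local Notation nsq_ge0 := (sqnorm_ge0 (@ip_ge0 _ H)).

Lemma hilbert_complete u : sq_cauchy (hinner H) u -> exists l, cvg u l.
Proof.
move=> /(ip_cauchyE (@ip_ge0 _ H)) /hcomplete [l /(ip_cvgE (@ip_ge0 _ H)) ul].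
by exists l.
Qed.

Lemma sq_cvg_cauchy u l : cvg u l -> sq_cauchy (hinner H) u.
Proof.
move=> ul e e0; have [N uN] := ul (e / 4) ltac:(lra).
exists N => m n Nm Nn; have -> : u m - u n = (u m - l) + - (u n - l).
  by rewrite opprB addrA subrK.
apply: le_lt_trans (sqnormD_le2 _ _) _; rewrite sqnormN.
have := uN m Nm; have := uN n Nn; lra.
Qed.

Lemma sq_cvgB u v l k : cvg u l -> cvg v k -> cvg (fun n => u n - v n) (l - k).
Proof.
move=> ul vk e e0; have [N1 uN1] := ul (e / 4) ltac:(lra).
have [N2 vN2] := vk (e / 4) ltac:(lra).
exists (maxn N1 N2) => n; rewrite geq_max => /andP[n1 n2].
have -> : u n - v n - (l - k) = (u n - l) + - (v n - k).
  by rewrite [in LHS]opprB [k - l]addrC addrACA opprB [k - v n]addrC.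
apply: le_lt_trans (sqnormD_le2 _ _) _; rewrite sqnormN.
have := uN1 n n1; have := vN2 n n2; lra.
Qed.

Lemma sqnorm_lim_le u l x (c : R) : cvg u l ->
    (forall e, 0 < e -> exists N, forall n, (N <= n)%N -> nsq (x - u n) < c + e) ->
  nsq (x - l) <= c.
Proof.
move=> ul near_c; have [N0 /(_ N0 (leqnn N0)) c1] := near_c 1 ltr01.
have C0 : 0 < c + 1 by have := nsq_ge0 (x - u N0); lra.
apply/ler_addgt0Pr => eta eta0.
(* for large [n], [sqnormD_le] with weight [t] bounds [nsq (x - l)] by [c + 3 eta / 4] *)
set t := eta / (4 * (c + 1)).
have t0 : 0 < t by rewrite divr_gt0 //; lra.
have tC : t * (c + 1) = eta / 4.
  by rewrite /t; field; rewrite ?gt_eqF //; lra.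
have /near_c [N1 uN1] : 0 < eta / (4 * (1 + t)) by apply: divr_gt0 => //; lra.
have /ul [N2 uN2] : 0 < t * eta / (4 * (1 + t)).
  by apply: divr_gt0; [exact: mulr_gt0 | lra].
pose n := maxn N1 N2.
have := uN1 n (leq_maxl _ _); have := uN2 n (leq_maxr _ _).
have e1 : eta / (4 * (1 + t)) * (1 + t) = eta / 4.
  by field; rewrite ?gt_eqF //; lra.
have e2 : t * eta / (4 * (1 + t)) * (1 + t) = t * (eta / 4).
  by field; rewrite ?gt_eqF //; lra.
have := sqnormD_le (x - u n) (u n - l) t0; rewrite addrA subrK.
have := nsq_ge0 (x - u n); have := nsq_ge0 (u n - l).
nra.
Qed.

Lemma Re_le0_small q (r : R) :
  (forall e, 0 < e -> exists2 w, nsq w < e & Re << w, q >_H = r) -> r <= 0.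
Proof.
move=> small; rewrite leNgt; apply/negP => r0.
set t := r / (nsq q + 1).
have t0 : 0 < t by rewrite divr_gt0 //; have := nsq_ge0 q; lra.
have tq : t * (nsq q + 1) = r by rewrite /t divfK // gt_eqF //; have := nsq_ge0 q; lra.
have [w w_small wq] := small (t ^+ 2) (exprn_gt0 2 t0).
have := Re_ip_le t q w; rewrite Re_ipC wq.
have := nsq_ge0 q; nra.
Qed.

Lemma Re_eq0_small q (r : R) :
  (forall e, 0 < e -> exists2 w, nsq w < e & Re << w, q >_H = r) -> r = 0.
Proof.
move=> small; apply/eqP; rewrite eq_le (Re_le0_small small) -oppr_le0 /=.
apply: (Re_le0_small (q := q)) => e /small [w w_small wq].
by exists (- w); rewrite ?sqnormN // ipNl ReN wq.
Qed.

Lemma ip_eq0_small q (c : R[i]) :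
  (forall e, 0 < e -> exists2 w, nsq w < e & << w, q >_H = c) -> c = 0.
Proof.
move=> small; apply: complex_eq0.
  by apply: (Re_eq0_small (q := q)) => e /small [w w_small wq]; exists w; rewrite ?wq.
apply: (Re_eq0_small (q := q)) => e /small [w w_small wq].
exists ('i%C^* *: w); last by rewrite ipZl wq ReJiM.
have i_unit : 'i%C^* * 'i%C^*^* = 1 :> R[i] by rewrite conjCK; simpc.
by rewrite /sqnorm ipZl ipZr mulrA i_unit mul1r.
Qed.

Section Subspace.
Variable S : H -> Prop.
Hypothesis S_subspace : subspace S.

Lemma subspace0 : S 0. Proof. by case: S_subspace. Qed.

Lemma subspaceD x y : S x -> S y -> S (x + y).
Proof. by case: S_subspace => _ SD Sx Sy; rewrite -[x]scale1r; apply: SD. Qed.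

Lemma subspaceZ c x : S x -> S (c *: x).
Proof. by case: S_subspace => S0 SD Sx; rewrite -[_ *: _]addr0; apply: SD. Qed.

Lemma subspaceB x y : S x -> S y -> S (x - y).
Proof. by move=> Sx Sy; rewrite -scaleN1r addrC; case: S_subspace => _; apply. Qed.

Lemma orth_Re z : (forall s, S s -> Re << z, s >_H = 0) -> orth S z.
Proof.
move=> Re0 s Ss; apply: complex_eq0; first exact: Re0.
by have := Re0 _ (subspaceZ 'i%C Ss); rewrite ipZr ReJiM.
Qed.

End Subspace.

Lemma orth_subspace A : subspace (orth A).
Proof.
split=> [a _ | c x y x_orth y_orth a Aa]; first exact: ip0l.
by rewrite ipDZl x_orth // y_orth // mulr0 addr0.
Qed.

Lemma orth_closed A : closed_set (orth A).
Proof.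
move=> u l u_orth ul a Aa; apply: (ip_eq0_small (q := a)) => e /ul [N uN].
exists (l - u N); first by rewrite -sqnormN opprB uN.
by rewrite ipBl u_orth // subr0.
Qed.

End Topology.

Lemma subrACA (V : zmodType) (a b c d : V) : (a - b) - (c - d) = (a - c) - (b - d).
Proof. by rewrite !opprB addrACA [RHS]addrACA [- c - b]addrC. Qed.

Section LinearMap.
Variables (R : realType) (U V : lmodType R[i]) (f : U -> V).
Hypothesis f_lin : linear f.

Lemma lin0 : f 0 = 0.
Proof.
have := f_lin 1 0 0; rewrite !scale1r !addr0 => f0.
by apply: (addrI (f 0)); rewrite -f0 addr0.
Qed.

Lemma linD x y : f (x + y) = f x + f y.
Proof. by have := f_lin 1 x y; rewrite !scale1r. Qed.

Lemma linB x y : f (x - y) = f x - f y.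
Proof.
have := f_lin (-1) y 0; rewrite !scaleN1r !addr0 lin0 addr0 => fN.
by rewrite linD fN.
Qed.

End LinearMap.

Section Projection.
Variables (R : realType) (H : hilbert R) (S : H -> Prop).
Hypotheses (S_subspace : subspace S) (S_closed : closed_set S).
Implicit Types (x z a b k : H).
Local Notation nsq := (sqnorm (hinner H)).
Local Notation nsq_ge0 := (sqnorm_ge0 (@ip_ge0 _ H)).

Lemma minimizer_orth x k :
  S k -> (forall s, S s -> nsq (x - k) <= nsq (x - s)) -> orth S (x - k).
Proof.
move=> Sk k_min; apply: orth_Re => // s Ss.
apply: (quadratic_ge0_eq0 (nsq_ge0 s)) => t.
have := k_min _ (subspaceD S_subspace (subspaceZ S_subspace t%:C%C Ss) Sk).
have -> : x - (t%:C%C *: s + k) = (x - k) - t%:C%C *: s by rewrite opprD addrA addrAC.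
rewrite [nsq (x - k - _)]sqnormB sqnormZ Re_ipZr; lra.
Qed.

(* The midpoint of [a] and [b] lies in [S], so it is at squared distance at
   least [d] from [x]; the parallelogram law turns this into a bound on [a - b]. *)
Lemma midpoint_sqnorm_le (d : R) x a b :
    (forall k, S k -> d <= nsq (x - k)) -> S a -> S b ->
  nsq (a - b) <= 2 * nsq (x - a) + 2 * nsq (x - b) - 4 * d.
Proof.
move=> d_le Sa Sb; pose h : R := 2^-1.
have hh : h%:C%C + h%:C%C = 1 :> R[i].
  by rewrite -rmorphD (_ : h + h = 1) // /h; field.
have mid : x - h%:C%C *: (a + b) = h%:C%C *: ((x - a) + (x - b)).
  by rewrite !scalerDr !scalerN addrACA -scalerDl hh scale1r opprD.
have := d_le _ (subspaceZ S_subspace h%:C%C (subspaceD S_subspace Sa Sb)).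
have h2 : h ^+ 2 = 4^-1 by rewrite /h; field.
rewrite mid sqnormZ h2.
have := parallelogram (x - a) (x - b).
have -> : (x - a) - (x - b) = - (a - b) by rewrite subrACA subrr add0r.
rewrite sqnormN; lra.
Qed.

Theorem projection x : exists2 k, S k & orth S (x - k).
Proof.
have S0 := subspace0 S_subspace.
pose E : set R := image S (fun k : H => nsq (x - k)).
have E_inf : has_inf E.
  by split; [exists (nsq (x - 0)), 0 | exists 0 => _ [k _ <-]; exact: nsq_ge0].
pose d := inf E.
have d_le k : S k -> d <= nsq (x - k) by move=> Sk; apply: (ge_inf E_inf.2); exists k.
have /choice [kf kf_min] : forall n, exists k, S k /\ nsq (x - k) < d + n.+1%:R^-1.
  move=> n; have n_pos : 0 < n.+1%:R^-1 :> R by rewrite invr_gt0.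
  have [_ [k Sk <-] k_min] := inf_adherent n_pos E_inf.
  by exists k.
have kf_cauchy : sq_cauchy (hinner H) kf.
  move=> e e0; have /invSn_lt [N Ne] : 0 < e / 4 by lra.
  exists N => m n Nm Nn.
  have := midpoint_sqnorm_le d_le (kf_min m).1 (kf_min n).1.
  have := (kf_min m).2; have := (kf_min n).2; have := Ne m Nm; have := Ne n Nn.
  by set rm := m.+1%:R^-1; set rn := n.+1%:R^-1; lra.
have [k kf_k] := hilbert_complete kf_cauchy.
have Sk : S k := S_closed (fun n => (kf_min n).1) kf_k.
exists k => //; apply: minimizer_orth => // s Ss; apply: le_trans (d_le s Ss).
apply: (sqnorm_lim_le kf_k) => e /invSn_lt [N Ne].
by exists N => n Nn; have := (kf_min n).2; have := Ne n Nn; set r := n.+1%:R^-1; lra.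
Qed.

Lemma orth_orth_sub z : orth (orth S) z -> S z.
Proof.
move=> z_orth; have [k Sk zk_orth] := projection z.
have zk0 : << z - k, z - k >_H = 0.
  by rewrite ipBl z_orth // ip_orthC ?zk_orth // subr0.
by rewrite -[z](subrK k) (ip_eq0 zk0) add0r.
Qed.

End Projection.

Definition sq_bounded (R : realType) (H : hilbert R) (M : H -> H) : Prop :=
  exists2 C : R, 0 <= C & forall x, sqnorm (hinner H) (M x) <= C * sqnorm (hinner H) x.

Definition sq_coercive (R : realType) (H : hilbert R) (M : H -> H) : Prop :=
  exists2 mu : R, 0 < mu & forall x, mu * sqnorm (hinner H) x <= Re << M x, x >_H.

Section LaxMilgram.
Variables (R : realType) (H : hilbert R) (S : H -> Prop) (B : H -> H) (M mu : R).
Local Notation nsq := (sqnorm (hinner H)).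
Local Notation nsq_ge0 := (sqnorm_ge0 (@ip_ge0 _ H)).
Hypotheses (S_subspace : subspace S) (S_closed : closed_set S) (B_lin : linear B).
Hypotheses (M_ge0 : 0 <= M) (B_bounded : forall x, nsq (B x) <= M * nsq x).
Hypotheses (mu_gt0 : 0 < mu) (B_coercive : forall x, mu * nsq x <= Re << B x, x >_H).

Definition lm_solvable y := exists2 P, S P & orth S (y - B P).

Lemma lm_solvable_subspace : subspace lm_solvable.
Proof.
have [S0 SDZ] := S_subspace; have [O0 ODZ] := orth_subspace S.
split; first by exists 0; rewrite // lin0 // subr0.
move=> c x y [P SP xP] [Q SQ yQ]; exists (c *: P + Q); first exact: SDZ.
suff -> : c *: x + y - B (c *: P + Q) = c *: (x - B P) + (y - B Q) by exact: ODZ.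
by rewrite B_lin scalerBr opprD addrACA.
Qed.

Lemma sq_cvg_map u l : sq_cvg (hinner H) u l -> sq_cvg (hinner H) (B \o u) (B l).
Proof.
have M1 : 0 < M + 1 by have := M_ge0; lra.
move=> ul e e0; have q0 : 0 < e / (M + 1) by apply: divr_gt0.
have eM : e / (M + 1) * (M + 1) = e by rewrite divfK // gt_eqF.
have [N uN] := ul _ q0; exists N => n Nn /=.
rewrite -linB //; apply: le_lt_trans (B_bounded _) _.
have := uN n Nn; have := nsq_ge0 (u n - l); have := M_ge0.
move: q0 eM; set q := e / (M + 1); nra.
Qed.

Lemma lm_apriori x y P Q : S P -> S Q -> orth S (x - B P) -> orth S (y - B Q) ->
  mu ^+ 2 * nsq (P - Q) <= nsq (x - y).
Proof.
move=> SP SQ xP yQ; have SPQ := subspaceB S_subspace SP SQ.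
have PQ : << x - y, P - Q >_H = << B (P - Q), P - Q >_H.
  have : << (x - B P) - (y - B Q), P - Q >_H = 0 by rewrite ipBl xP // yQ // subrr.
  by rewrite subrACA -linB // ipBl => /eqP; rewrite subr_eq0 => /eqP.
have := B_coercive (P - Q); rewrite -PQ.
have := Re_ip_le mu (P - Q) (x - y); rewrite Re_ipC.
have := nsq_ge0 (P - Q); have := mu_gt0; nra.
Qed.

Lemma lm_solvable_closed : closed_set lm_solvable.
Proof.
move=> u l u_solv ul.
have /choice [P P_solv] : forall n, exists P, S P /\ orth S (u n - B P).
  by move=> n; have [P] := u_solv n; exists P.
have P_cauchy : sq_cauchy (hinner H) P.
  move=> e e0; have /(sq_cvg_cauchy ul) [N uN] : 0 < e * mu ^+ 2.
    by rewrite mulr_gt0 ?exprn_gt0.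
  exists N => m n Nm Nn.
  have := lm_apriori (P_solv m).1 (P_solv n).1 (P_solv m).2 (P_solv n).2.
  have := uN m n Nm Nn; have := nsq_ge0 (P m - P n); have := exprn_gt0 2 mu_gt0.
  nra.
have [Pl P_Pl] := hilbert_complete P_cauchy.
exists Pl; first exact: S_closed (fun n => (P_solv n).1) P_Pl.
apply: (orth_closed (u := fun n => u n - B (P n))); first by move=> n; case: (P_solv n).
exact: sq_cvgB ul (sq_cvg_map P_Pl).
Qed.

(* The orthogonal of [S] lies in the range and [S] meets the orthogonal of
   the range only in [0] by coercivity, so the closed range is everything. *)
Lemma lm_solvable_all y : lm_solvable y.
Proof.
have [k k_solv yk_orth] := projection lm_solvable_subspace lm_solvable_closed y.
have S_solv s : orth S s -> lm_solvable s.
  by move=> s_orth; exists 0; [case: S_subspace | rewrite lin0 // subr0].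
have Syk : S (y - k).
  by apply: (orth_orth_sub S_subspace S_closed) => r /S_solv; apply: yk_orth.
have Byk_solv : lm_solvable (B (y - k)).
  by exists (y - k); rewrite // subrr => s _; apply: ip0l.
have yk0 : y - k = 0.
  apply: sqnorm_eq0; apply/eqP; rewrite eq_le nsq_ge0 andbT.
  have := B_coercive (y - k); rewrite (ip_orthC (yk_orth _ Byk_solv)) /=.
  have := nsq_ge0 (y - k); have := mu_gt0; nra.
by rewrite -[y](subrK k) yk0 add0r.
Qed.

End LaxMilgram.

Theorem lax_milgram (R : realType) (H : hilbert R) (S : H -> Prop) (B : H -> H) :
  subspace S -> closed_set S -> linear B -> sq_bounded B -> sq_coercive B ->
  forall y, exists2 P, S P & orth S (y - B P).
Proof.
move=> S_sub S_cl B_lin [M M0 BM] [mu mu0 Bmu] y.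
exact: (lm_solvable_all S_sub S_cl B_lin M0 BM mu0 Bmu y).
Qed.

Section ProductSpace.
Variables (R : realType) (H K : hilbert R).

Definition prod_inner (p q : (H * K)%type) : R[i] := << p.1, q.1 >_H + << p.2, q.2 >_K.

Lemma prod_inner_ax : is_inner_product prod_inner.
Proof.
split.
- by move=> c [x1 x2] [y1 y2] [z1 z2]; rewrite /prod_inner /= !ipDZl; ring.
- by move=> [x1 x2] [y1 y2]; rewrite /prod_inner /= (ipC x1 y1) (ipC x2 y2) rmorphD.
- by move=> x; rewrite addr_ge0 ?ip_ge0.
- move=> [x1 x2]; rewrite /prod_inner /= => /eqP; rewrite paddr_eq0 ?ip_ge0 //.
  by case/andP=> /eqP/ip_eq0 -> /eqP/ip_eq0 ->.
Qed.

Let prod_inner_ge0 p : 0 <= prod_inner p p.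
Proof. by case: prod_inner_ax. Qed.

Lemma sqnorm_prod p :
  sqnorm prod_inner p = sqnorm (hinner H) p.1 + sqnorm (hinner K) p.2.
Proof. exact: ReD. Qed.

Lemma sq_cvg_prod u l :
  sq_cvg prod_inner u l <->
  sq_cvg (hinner H) (fun n => (u n).1) l.1 /\ sq_cvg (hinner K) (fun n => (u n).2) l.2.
Proof.
split=> [ul | [u1 u2] e e0].
  split=> e e0; have [N uN] := ul e e0; exists N => n Nn; have := uN n Nn.
    by rewrite sqnorm_prod; have := sqnorm_ge0 (@ip_ge0 _ K) ((u n).2 - l.2); lra.
  by rewrite sqnorm_prod; have := sqnorm_ge0 (@ip_ge0 _ H) ((u n).1 - l.1); lra.
have /u1 [N1 uN1] : 0 < e / 2 by lra.
have /u2 [N2 uN2] : 0 < e / 2 by lra.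
exists (maxn N1 N2) => n; rewrite geq_max sqnorm_prod => /andP[n1 n2].
by have := uN1 n n1; have := uN2 n n2; lra.
Qed.

Lemma sq_cauchy_prod u : sq_cauchy prod_inner u ->
  sq_cauchy (hinner H) (fun n => (u n).1) /\ sq_cauchy (hinner K) (fun n => (u n).2).
Proof.
move=> u_cauchy; split=> e e0; have [N uN] := u_cauchy e e0.
  exists N => m n Nm Nn; have := uN m n Nm Nn; rewrite sqnorm_prod.
  by have := sqnorm_ge0 (@ip_ge0 _ K) ((u m).2 - (u n).2); lra.
exists N => m n Nm Nn; have := uN m n Nm Nn; rewrite sqnorm_prod.
by have := sqnorm_ge0 (@ip_ge0 _ H) ((u m).1 - (u n).1); lra.
Qed.

Lemma prod_complete u : ip_cauchy prod_inner u -> exists l, ip_cvg prod_inner u l.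
Proof.
move=> /(ip_cauchyE prod_inner_ge0) /sq_cauchy_prod [/hilbert_complete [l1 ul1]].
move=> /hilbert_complete [l2 ul2].
by exists (l1, l2); apply/(ip_cvgE prod_inner_ge0)/sq_cvg_prod.
Qed.

Definition prod_hilbert : hilbert R := Hilbert prod_inner_ax prod_complete.

Lemma ip_prodE (p q : prod_hilbert) :
  << p, q >_prod_hilbert = << p.1, q.1 >_H + << p.2, q.2 >_K.
Proof. by []. Qed.

End ProductSpace.

Section Operators.
Variables (R : realType) (H K : hilbert R).
Local Notation HK := (prod_hilbert H K).

Definition graph (domT : H -> Prop) (T : H -> K) (p : HK) : Prop :=
  domT p.1 /\ T p.1 = p.2.

Definition neg_adjoint_graph (domS : K -> Prop) (S : K -> H) (p : HK) : Prop :=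
  adjoint_graph domS S p.1 (- p.2).

Lemma neg_adjoint_graphE domS S :
  neg_adjoint_graph domS S = orth (image domS (fun y => (S y, y) : HK)).
Proof.
apply/funext => p; apply/propext; split=> [p_adj _ [y y_dom <-] | p_orth y y_dom].
  by rewrite ip_prodE /= ipC p_adj // -ipC ipNl addNr.
have := p_orth _ (ex_intro2 _ _ y y_dom erefl); rewrite ip_prodE /= => /eqP.
rewrite addr_eq0 => /eqP p1Sy.
by rewrite (ipC p.1 (S y)) p1Sy rmorphN ipNr (ipC p.2 y).
Qed.

Lemma neg_adjoint_graph_subspace domS S : subspace (neg_adjoint_graph domS S).
Proof. by rewrite neg_adjoint_graphE; apply: orth_subspace. Qed.

Lemma neg_adjoint_graph_closed domS S : closed_set (neg_adjoint_graph domS S).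
Proof. by rewrite neg_adjoint_graphE; apply: orth_closed. Qed.

Lemma adjoint_domB (domT : H -> Prop) (T : H -> K) y y' :
  adjoint_dom domT T y -> adjoint_dom domT T y' -> adjoint_dom domT T (y - y').
Proof.
move=> [z yz] [z' yz']; exists (z - z') => x x_dom.
by rewrite !ipBr yz // yz'.
Qed.

Section ClosedOperator.
Variables (domT : H -> Prop) (T : H -> K).
Hypotheses (T_op : is_operator domT T) (T_closed : closed_operator domT T).

Lemma op_domD x y : domT x -> domT y -> domT (x + y).
Proof. by case: T_op => _ dD _ dx dy; rewrite -[x]scale1r; apply: dD. Qed.

Lemma op_domB x y : domT x -> domT y -> domT (x - y).
Proof. by case: T_op => _ dD _ dx dy; rewrite addrC -scaleN1r; apply: dD. Qed.

Lemma op0 : T 0 = 0.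
Proof.
case: T_op => d0 _ TD; have := TD 1 0 0 d0 d0; rewrite !scale1r addr0 => T0.
by apply: (addrI (T 0)); rewrite -T0 addr0.
Qed.

Lemma opD x y : domT x -> domT y -> T (x + y) = T x + T y.
Proof. by case: T_op => _ _ TD dx dy; have := TD 1 x y dx dy; rewrite !scale1r. Qed.

Lemma opB x y : domT x -> domT y -> T (x - y) = T x - T y.
Proof.
case: T_op => _ _ TD dx dy; have := TD (-1) y x dy dx; rewrite !scaleN1r.
by rewrite addrC => ->; rewrite addrC.
Qed.

Lemma graph_subspace : subspace (graph domT T).
Proof.
case: T_op => d0 dD TD; split; first by split; rewrite // op0.
by move=> c [x1 x2] [y1 y2] [/= dx <-] [/= dy <-]; split; [apply: dD | apply: TD].
Qed.

Lemma graph_closed : closed_set (graph domT T).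
Proof.
move=> u l u_graph /sq_cvg_prod [u1 u2].
have Tu : (fun n => T (u n).1) = (fun n => (u n).2).
  by apply/funext => n; case: (u_graph n).
apply: (T_closed (u := fun n => (u n).1)); first by move=> n; case: (u_graph n).
  exact/(ip_cvgE (@ip_ge0 _ H)).
by rewrite Tu; apply/(ip_cvgE (@ip_ge0 _ K)).
Qed.

(* Projecting [(v, w)] onto the closed graph of [T] leaves a remainder [p]
   with [(p.2, - p.1)] in the graph of [T^*]; the hypothesis makes it
   orthogonal to [(v, w)], hence [p = 0]. *)
Lemma closed_op_biadjoint v w :
    (forall s r, adjoint_graph domT T s r -> << r, v >_H = << s, w >_K) ->
  domT v /\ T v = w.
Proof.
move=> vw; have [k k_graph] := projection graph_subspace graph_closed ((v, w) : HK).
set p := (v, w) - k => p_orth.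
have p_adj : adjoint_graph domT T p.2 (- p.1).
  move=> x x_dom; have := p_orth (x, T x) (conj x_dom erefl).
  rewrite ip_prodE /= => /eqP; rewrite addr_eq0 => /eqP p1x.
  by rewrite (ipC p.2 (T x)) ipNr (ipC p.1 x) p1x rmorphN opprK.
have p0 : p = 0.
  apply: (@ip_eq0 _ HK); rewrite {2}/p ipBr (p_orth k k_graph) subr0 ip_prodE /=.
  by rewrite -(vw _ _ p_adj) ipNl subrr.
by move/subr0_eq: p0 k_graph => <-.
Qed.

Lemma neg_adjoint_sub_sym (domS : K -> Prop) (S : K -> H) :
  neg_adjoint_sub domT T domS S -> neg_adjoint_sub domS S domT T.
Proof.
move=> TS v z vz; apply: closed_op_biadjoint => s r sr.
have [s_dom Ss] := TS s r sr.
by have := vz s s_dom; rewrite Ss ipNl ipNr => <-; rewrite opprK.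
Qed.

End ClosedOperator.
End Operators.

Lemma coerciveP (R : realType) (H : hilbert R) (M : H -> H) :
  coercive M -> [/\ linear M, sq_bounded M & sq_coercive M].
Proof.
have nsq_ge0 := sqnorm_ge0 (@ip_ge0 _ H).
move=> [[M_lin [C [/ge0_realE [-> C0] MC]]] [mu [/gt0_realE [-> mu0] Mmu]]].
split=> //.
  exists (Re C ^+ 2) => [|x]; first exact: exprn_ge0.
  have := MC x; rewrite !(ipnormE (@ip_ge0 _ H)) -rmorphM lecR => Mx_le.
  rewrite -(sqr_sqrtr (nsq_ge0 (M x))) -(sqr_sqrtr (nsq_ge0 x)).
  have := sqrtr_ge0 (sqnorm (hinner H) (M x)); have := sqrtr_ge0 (sqnorm (hinner H) x).
  nra.
exists (Re mu) => // x; have := Mmu x.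
by rewrite /ipnorm sqrtCK (ip_sqnorm (@ip_ge0 _ H)) -rmorphM -complexRe lecR.
Qed.

Section ProductMap.
Variables (R : realType) (H K : hilbert R) (f : H -> H) (g : K -> K).

Definition prod_map (p : prod_hilbert H K) : prod_hilbert H K := (f p.1, g p.2).

Lemma prod_map_linear : linear f -> linear g -> linear prod_map.
Proof. by move=> f_lin g_lin c [x1 x2] [y1 y2]; rewrite /prod_map /= f_lin g_lin. Qed.

Lemma sq_bounded_prod : sq_bounded f -> sq_bounded g -> sq_bounded prod_map.
Proof.
move=> [Cf Cf0 fC] [Cg Cg0 gC]; exists (Cf + Cg) => [|[x1 x2]]; first exact: addr_ge0.
rewrite /sqnorm !ip_prodE !ReD /=; have := fC x1; have := gC x2.
have := sqnorm_ge0 (@ip_ge0 _ H) x1; have := sqnorm_ge0 (@ip_ge0 _ K) x2.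
rewrite /sqnorm; nra.
Qed.

Lemma sq_coercive_prod : sq_coercive f -> sq_coercive g -> sq_coercive prod_map.
Proof.
move=> [mf mf0 fm] [mg mg0 gm]; exists (Num.min mf mg) => [|[x1 x2]].
  by rewrite lt_min mf0.
have m1 : Num.min mf mg <= mf by rewrite ge_min lexx.
have m2 : Num.min mf mg <= mg by rewrite ge_min lexx orbT.
rewrite /sqnorm !ip_prodE !ReD /=; have := fm x1; have := gm x2.
have := sqnorm_ge0 (@ip_ge0 _ H) x1; have := sqnorm_ge0 (@ip_ge0 _ K) x2.
rewrite /sqnorm; nra.
Qed.

End ProductMap.

Section BoundaryValueProblem.
Variables (R : realType) (H0 H1 : hilbert R).
Variables (domG : H0 -> Prop) (G : H0 -> H1) (domD : H1 -> Prop) (D : H1 -> H0).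
Variables (a : H1 -> H1) (m : H0 -> H0).
Hypotheses (G_op : is_operator domG G) (G_closed : closed_operator domG G).
Hypotheses (D_op : is_operator domD D) (D_closed : closed_operator domD D).
Hypothesis GD : neg_adjoint_sub domG G domD D.
Hypotheses (a_coercive : coercive a) (m_coercive : coercive m).

Lemma Gring_sub : neg_adjoint_sub domD D domG G.
Proof. exact (neg_adjoint_sub_sym G_op G_closed GD). Qed.

Lemma ip_D_Gring v y :
  dom_Gring domD D v -> domD y -> << D y, v >_H0 = - << y, G v >_H1.
Proof. by move=> [z vz] y_dom; have [_ ->] := Gring_sub vz; rewrite ipNr opprK vz. Qed.

Lemma homogeneous_eq0 v :
  dom_DaG domG G domD a v -> m v = D (a (G v)) -> dom_Gring domD D v -> v = 0.
Proof.
move=> [v_dom aGv_dom] mv v_Gring.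
have [_ _ [mum mum0 m_co]] := coerciveP m_coercive.
have [_ _ [mua mua0 a_co]] := coerciveP a_coercive.
have nsq0_ge0 := sqnorm_ge0 (@ip_ge0 _ H0); have nsq1_ge0 := sqnorm_ge0 (@ip_ge0 _ H1).
apply: sqnorm_eq0; apply/eqP; rewrite eq_le nsq0_ge0 andbT.
have := m_co v; rewrite mv ip_D_Gring // ReN.
have := a_co (G v); have := nsq1_ge0 (G v); have := nsq0_ge0 v; nra.
Qed.

Variable u0 : H0.

Definition solves u :=
  dom_DaG domG G domD a u /\ m u - D (a (G u)) = 0 /\ dom_Gring domD D (u - u0).

Lemma solves_unique u u' : solves u -> solves u' -> u = u'.
Proof.
move=> [[u_dom aGu_dom] [/subr0_eq u_eq u_bd]].
move=> [[u'_dom aGu'_dom] [/subr0_eq u'_eq u'_bd]].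
have [[a_lin _ _] [m_lin _ _]] := (coerciveP a_coercive, coerciveP m_coercive).
have aGv : a (G (u - u')) = a (G u) - a (G u') by rewrite (opB G_op) // linB.
apply/subr0_eq/homogeneous_eq0.
- split; first exact: (op_domB G_op u_dom u'_dom).
  by rewrite aGv; exact: (op_domB D_op aGu_dom aGu'_dom).
- by rewrite aGv (opB D_op) // linB // u_eq u'_eq.
- by have := adjoint_domB u_bd u'_bd; rewrite subrACA subrr subr0.
Qed.

Hypothesis u0_dom : domG u0.

Lemma solves_exists : exists u, solves u.
Proof.
have [m_lin m_bnd m_co] := coerciveP m_coercive.
have [a_lin a_bnd a_co] := coerciveP a_coercive.
pose B := prod_map m a.
have B_lin : linear B := prod_map_linear m_lin a_lin.
have [[w g] Swg wg_orth] := lax_milgram (neg_adjoint_graph_subspace domD D)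
  (neg_adjoint_graph_closed (domS := domD) (S := D)) B_lin (sq_bounded_prod m_bnd a_bnd)
  (sq_coercive_prod m_co a_co) (- B (u0, G u0)).
have [w_dom Gw] := Gring_sub Swg; rewrite opprK in Gw.
pose u := u0 + w.
have Bu : B (u0, G u0) + B (w, g) = (m u, a (G u)).
  by rewrite -(linD B_lin) /B /prod_map /= (opD G_op) // Gw.
have weak s r : adjoint_graph domD D s r -> << r, a (G u) >_H1 = << s, m u >_H0.
  move=> sr; have S_sr : neg_adjoint_graph domD D ((s, - r) : prod_hilbert H0 H1).
    by rewrite /neg_adjoint_graph /= opprK.
  have := wg_orth _ S_sr; rewrite -opprD Bu ipNl ip_prodE /= => /eqP.
  rewrite oppr_eq0 addr_eq0 ipNr opprK => /eqP mu_s.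
  by rewrite (ipC (a (G u)) r) -mu_s (ipC (m u) s).
have [aGu_dom DaGu] := closed_op_biadjoint D_op D_closed weak.
exists u; split; first by split; [exact: (op_domD G_op u0_dom w_dom) | exact: aGu_dom].
split; first by rewrite DaGu subrr.
by exists (- g); rewrite /u addrAC subrr add0r.
Qed.

End BoundaryValueProblem.

Theorem proposition2p11 (R : realType) (H0 H1 : hilbert R)
    (domG : H0 -> Prop) (G : H0 -> H1) (domD : H1 -> Prop) (D : H1 -> H0)
    (a : H1 -> H1) (m : H0 -> H0) (u0 : H0) :
  densely_defined_closed domG G ->
  densely_defined_closed domD D ->
  neg_adjoint_sub domG G domD D ->
  coercive a -> coercive m ->
  BD domG G domD D u0 ->
  exists! u : H0,
    dom_DaG domG G domD a u /\
    m u - D (a (G u)) = 0 /\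
    dom_Gring domD D (u - u0).
Proof.
move=> [G_op _ G_closed] [D_op _ D_closed] GD a_coer m_coer [u0_dom _].
have [u u_solves] := solves_exists G_op G_closed D_op D_closed GD a_coer m_coer u0_dom.
exists u; split=> // u'.
exact: (solves_unique G_op G_closed D_op GD a_coer m_coer u_solves).
Qed.
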